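(* Let $G$ be a clique tree on $n$ vertices with $b$ blocks, each block having at least $3$ vertices, and let $k=Z(G)$. Then $k=n-b$, and consequently $\lfloor n/2\rfloor+1\le k\le n-1$.
   Context: A block of a connected graph is a maximal connected subgraph without a cut vertex of its own; a clique tree is a connected graph each of whose blocks is a complete graph. $Z(G)$ denotes the zero forcing number: with vertices coloured blue or white, a blue vertex with exactly one white neighbour turns that neighbour blue; $Z(G)$ is the minimum size of an initially blue set from which all vertices eventually become blue. *)

From mathcomp Require Import all_boot.
Set Implicit Arguments. Unset Strict Implicit. Unset Printing Implicit Defensive.

(* A simple graph on a finite vertex type T is given by an edge relation
   e : rel T, assumed symmetric and irreflexive in the theorem. *)
Section Graphs.
Variables (T : finType) (e : rel T).

Definition induced_rel (S : {set T}) : rel T :=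
  [rel x y | [&& e x y, x \in S & y \in S]].

(* the subgraph induced on S is connected (the empty graph counts as connected) *)
Definition connected_on (S : {set T}) : bool :=
  [forall x in S, forall y in S, connect (induced_rel S) x y].

Definition no_cut_connected (S : {set T}) : bool :=
  connected_on S && [forall v in S, connected_on (S :\ v)].

(* blocks: maximal connected subgraphs without a cut vertex
   (maximal such subgraphs are automatically induced) *)
Definition blocks : {set {set T}} := [set S | maxset no_cut_connected S].

Definition is_clique (S : {set T}) : bool :=
  [forall x in S, forall y in S, (x != y) ==> e x y].

Definition clique_tree : bool :=
  connected_on setT && [forall S in blocks, is_clique S].

Definition force_step (B : {set T}) : {set T} :=
  B :|: [set w | [exists u in B, (w \notin B) && (e u w)
                    && (#|[set x | e u x & x \notin B]| == 1)]].

(* the final coloured set (the process stabilises after at most #|T| rounds) *)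
Definition force_closure (B : {set T}) : {set T} := iter #|T| force_step B.

Definition zero_forcing_set (B : {set T}) : bool := force_closure B == setT.

(* zero forcing number: minimum size of a zero forcing set
   (setT is always one, so #|T| is a valid default) *)
Definition zero_forcing_number : nat :=
  \big[minn/#|T|]_(B : {set T} | zero_forcing_set B) #|B|.

End Graphs.

From mathcomp Require Import all_boot zify.
Set Implicit Arguments. Unset Strict Implicit. Unset Printing Implicit Defensive.

(* In a zero forcing process each initially white vertex w is forced by a
   neighbour u; the edge uw lies in a block, which is a clique.  A clique can receive at
   most one forcing: when u forces w, every other vertex of the clique is already blue.
   So w |-> (block of its forcing edge) is injective and every zero forcing set has at
   least n - b vertices.

   Starting from one vertex, the graph is rebuilt by attaching one block at a
   time at a single vertex.  The invariant (tree_part U W) says that U admits no detour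
   (two vertices of U adjacent to one component of G - U coincide; this follows from the
   ear lemma: a clique plus an outside path between two of its vertices has no cut vertex),
   that the "white" set W has one vertex per block inside U, and that U minus W forces all
   of U within U.  At the end ~: W is a zero forcing set with n - b vertices, and the
   invariant also gives n >= 2b + 1, whence floor(n/2) + 1 <= n - b <= n - 1. *)

Section CliqueTrees.
Variables (T : finType) (e : rel T).
Hypothesis e_sym : symmetric e.

Local Notation con X := (connect (induced_rel e X)).

Lemma con_sym (X : {set T}) x y : con X x y = con X y x.
Proof.
apply: (sym_connect_sym (e := induced_rel e X)) => u v.
by rewrite /induced_rel /= e_sym; case: (u \in X); rewrite ?andbT ?andbF.
Qed.

Lemma con_sub (X Y : {set T}) x y : X \subset Y -> con X x y -> con Y x y.
Proof.
move=> sXY; apply: connect_sub => u v /and3P[euv uX vX].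
by apply: connect1; rewrite /induced_rel /= euv !(subsetP sXY).
Qed.

Lemma con_edge (X : {set T}) x y : x \in X -> y \in X -> e x y -> con X x y.
Proof. by move=> xX yX exy; apply: connect1; rewrite /induced_rel /= exy xX yX. Qed.

Lemma path_con (X : {set T}) x p :
  path e x p -> {subset x :: p <= X} -> con X x (last x p).
Proof.
elim: p x => [|y p IH] x /=; first by move=> _ _; apply: connect0.
move=> /andP[exy hp] sX; apply: (connect_trans (y := y)).
  by apply: con_edge; rewrite ?sX ?inE ?eqxx ?orbT.
by apply: IH => // t tp; apply: sX; rewrite inE tp orbT.
Qed.

Lemma induced_path (X : {set T}) x p :
  path (induced_rel e X) x p -> x \in X -> path e x p /\ {subset x :: p <= X}.
Proof.
elim: p x => [|y p IH] x /=; first by move=> _ xX; split=> // t; rewrite inE => /eqP->.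
move=> /andP[/and3P[exy _ yX] hp] xX; have [hp' sX] := IH y hp yX.
split; first by rewrite exy.
by move=> t; rewrite inE => /orP[/eqP->|/sX].
Qed.

Lemma connected_onP (X : {set T}) :
  reflect {in X &, forall x y, con X x y} (connected_on e X).
Proof.
apply: (iffP forall_inP) => [h x y xX yX | h x xX]; first exact: (forall_inP (h x xX)).
by apply/forall_inP => y yX; apply: h.
Qed.

Lemma cliqueP (S : {set T}) :
  reflect {in S &, forall x y, x != y -> e x y} (is_clique e S).
Proof.
apply: (iffP forall_inP) => [h x y xS yS | h x xS].
  by apply/implyP; exact: (forall_inP (h x xS)).
by apply/forall_inP => y yS; apply/implyP; apply: h.
Qed.

Lemma clique_subset (S S' : {set T}) : S' \subset S -> is_clique e S -> is_clique e S'.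
Proof.
by move=> sS /cliqueP cS; apply/cliqueP => x y xS yS; apply: cS; apply: (subsetP sS).
Qed.

Lemma pair_clique x y : e x y -> is_clique e [set x; y].
Proof.
move=> exy; apply/cliqueP => u v; rewrite !inE.
by move=> /orP[]/eqP-> /orP[]/eqP->; rewrite ?eqxx // e_sym.
Qed.

Lemma connected_via_clique (S Y : {set T}) : is_clique e S ->
  {in Y, forall y, exists2 c, c \in S :&: Y & con Y y c} -> connected_on e Y.
Proof.
move=> /cliqueP cS reach; apply/connected_onP => x y /reach[cx cxSY xcx] /reach[cy cySY ycy].
move: cxSY cySY; rewrite !inE => /andP[cxS cxY] /andP[cyS cyY].
apply: (connect_trans xcx); rewrite con_sym; apply: (connect_trans ycy).
have [->|ncyx] := eqVneq cy cx; first exact: connect0.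
by apply: con_edge; rewrite // cS.
Qed.

Lemma clique_no_cut (S : {set T}) : is_clique e S -> no_cut_connected e S.
Proof.
have self (K : {set T}) : is_clique e K -> connected_on e K.
  by move=> cK; apply: connected_via_clique cK _ => y yK; exists y; rewrite ?inE ?yK.
move=> cS; rewrite /no_cut_connected self //=.
by apply/forall_inP => v _; apply: self; apply: clique_subset cS; apply: subsetDl.
Qed.

Lemma uniq_walk_reach (Y : {set T}) s y v :
  sorted e s -> uniq s -> y \in s -> y != v -> {in s, forall t, t != v -> t \in Y} ->
  exists2 c, c \in [:: head y s; last y s] & (c != v) && con Y y c.
Proof.
move=> es us ys yv sY; case/splitPr: ys es us sY => s1 s2.
rewrite sorted_cat_cons cat_uniq => /andP[es1 es2] /and3P[_ s1s2 _] sY.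
have [vs1|vs1] := boolP (v \in s1).
  have vs2 : v \notin y :: s2 by apply: contra s1s2 => vs2; apply/hasP; exists v.
  exists (last y s2); first by rewrite last_cat /= !inE eqxx orbT.
  rewrite (memPn vs2 _ (mem_last y s2)) /=.
  by apply: path_con es2 _ => t ts; apply: (sY t _ (memPn vs2 t ts)); rewrite mem_cat ts orbT.
case: s1 vs1 es1 sY {s1s2} => [|h s1] vs1 es1 sY.
  by exists y; rewrite ?mem_head // yv connect0.
exists h; first exact: mem_head.
rewrite (memPn vs1 h (mem_head _ _)) con_sym /=.
have := path_con es1; rewrite last_rcons; apply=> t.
rewrite -[h :: _]/(rcons (h :: s1) y) mem_rcons inE => /predU1P[->|ts1]; apply: sY => //.
- by rewrite mem_cat mem_head orbT.
- by rewrite mem_cat ts1.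
- by apply: contraNneq vs1 => <-.
Qed.

Lemma ear_no_cut (S : {set T}) a a' q :
  is_clique e S -> a \in S -> a' \in S -> a != a' ->
  all [pred t | t \notin S] q -> uniq q -> path e a (rcons q a') ->
  no_cut_connected e (S :|: [set t in q]).
Proof.
move=> cS aS a'S aa' /allP qS uq hp; set X := S :|: [set t in q].
have Sq t : t \in S -> t \notin q by move=> tS; apply: contraL tS; apply: qS.
have us : uniq (a :: rcons q a').
  by rewrite /= mem_rcons inE negb_or aa' Sq //= rcons_uniq Sq.
have reach v y : y \in X :\ v -> exists2 c, c \in S :&: (X :\ v) & con (X :\ v) y c.
  rewrite !inE => /andP[yv yX]; have [yS|ynS] := boolP (y \in S).
    by exists y; rewrite ?inE ?yv ?yS ?connect0.
  have ys : y \in a :: rcons q a'.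
    by move: yX; rewrite (negPf ynS) /= => yq; rewrite inE mem_rcons inE yq !orbT.
  have [|c] := @uniq_walk_reach (X :\ v) (a :: rcons q a') y v hp us ys yv.
    move=> t; rewrite inE mem_rcons inE orbCA => /predU1P[->|/predU1P[->|tq]] tv;
    by rewrite !inE tv ?aS ?a'S ?tq ?orbT.
  rewrite /= last_rcons !inE => cS' /andP[cv yc]; exists c => //.
  by rewrite !inE cv; case/orP: cS' => /eqP->; rewrite ?aS ?a'S.
apply/andP; split.
  apply: connected_via_clique cS _ => y yX.
  have [yS|ynS] := boolP (y \in S); first by exists y; rewrite ?inE ?yS ?yX ?connect0.
  have [|c] := reach a y; first by rewrite in_setD1 yX andbT; apply: contraNneq ynS => ->.
  rewrite !inE => /andP[cS' _] yc; exists c; first by rewrite !inE cS'.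
  exact: con_sub (subsetDl _ _) yc.
by apply/forall_inP => v _; apply: connected_via_clique cS _ => y /reach.
Qed.

Definition detour_free (U : {set T}) : Prop :=
  forall x1 x2 y1 y2, x1 \in U -> x2 \in U -> y1 \notin U -> y2 \notin U ->
    e x1 y1 -> e y2 x2 -> con (~: U) y1 y2 -> x1 = x2.

(* A block that is a clique admits no detour: a detour could be shortened to a
   duplicate-free one, and the ear lemma would give a strictly larger 2-connected set. *)
Lemma clique_block_detour_free (S : {set T}) :
  S \in blocks e -> is_clique e S -> detour_free S.
Proof.
rewrite inE => /maxsetP[_ maxS] cS x1 x2 y1 y2 x1S x2S y1S y2S e1 e2 /connectP[p hp def_y2].
apply/eqP; apply: contraT => nx12; move: y2S e2; rewrite {y2}def_y2.
case: (shortenP hp) => p' hp' up' _ y2S e2.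
have [hpe sub] := induced_path hp' (etrans (in_setC _ _) y1S).
have : no_cut_connected e (S :|: [set t in y1 :: p']).
  apply: (ear_no_cut (q := y1 :: p')) cS x1S x2S nx12 _ up' _.
    by apply/allP => t /sub /=; rewrite inE.
  by rewrite /= rcons_path e1 hpe e2.
by move/maxS/(_ (subsetUl _ _))/setP/(_ y1); rewrite !inE eqxx orbT (negPf y1S).
Qed.

Lemma edge_in_block x y : e x y -> exists2 S, S \in blocks e & (x \in S) && (y \in S).
Proof.
move=> exy; have [S maxS sS] := maxset_exists (clique_no_cut (pair_clique exy)).
by exists S; rewrite ?inE // !(subsetP sS) ?set21 ?set22.
Qed.

Lemma block_exists : exists S, S \in blocks e.
Proof.
have c0 : is_clique e set0 by apply/cliqueP => x; rewrite inE.
by have [S maxS _] := maxset_exists (clique_no_cut c0); exists S; rewrite inE.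
Qed.

Lemma meet_single (U S : {set T}) x s :
  S :&: U = [set x] -> s \in S -> (s \in U) = (s == x).
Proof. by move=> SU sS; rewrite -in_set1 -SU inE sS. Qed.

Lemma attach_once (U S : {set T}) x y : detour_free U -> is_clique e S ->
  x \in U -> x \in S -> y \in S -> y \notin U -> S :&: U = [set x].
Proof.
move=> dU /cliqueP cS xU xS yS yU; apply/setP => t; rewrite !inE.
have [->|tx] := eqVneq t x; first by rewrite xS xU.
apply/negbTE/andP => -[tS tU]; move/eqP: tx; apply; apply/esym/(dU x t y y) => //.
- by apply: cS => //; apply: contraNneq yU => <-.
by apply: cS => //; apply: contraNneq yU => ->.
Qed.

Lemma attach_nbr (U S : {set T}) x s z : detour_free U -> is_clique e S ->
  S :&: U = [set x] -> s \in S -> s != x -> z \in U -> e s z -> z = x.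
Proof.
move=> dU /cliqueP cS SU sS sx zU esz.
have /setIP[xS xU] : x \in S :&: U by rewrite SU set11.
have sU : s \notin U by rewrite (meet_single SU sS).
by apply/esym/(dU x z s s) => //; apply: cS; rewrite // eq_sym.
Qed.

Lemma detour_free_glue (U S : {set T}) x : detour_free U -> S \in blocks e ->
  is_clique e S -> S :&: U = [set x] -> detour_free (U :|: S).
Proof.
move=> dU SB cS SU; have /setIP[xS xU] : x \in S :&: U by rewrite SU set11.
have mixed a b ya yb : a \in U -> a \notin S -> b \in S -> b \notin U -> ya \notin U ->
    yb \notin U -> e a ya -> e yb b -> con (~: U) ya yb -> False.
  move=> aU aS bS bU yaU ybU ea eb cab; have bx : b != x by apply: contraNneq bU => ->.
  have ebx : e b x by move/cliqueP: cS; apply.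
  have cab' : con (~: U) ya b by apply: connect_trans cab (con_edge _ _ eb); rewrite inE.
  by move: aS; rewrite (dU a x ya b aU xU yaU bU ea ebx cab') xS.
move=> x1 x2 y1 y2; rewrite !inE !negb_or => x1US x2US /andP[y1U y1S] /andP[y2U y2S] e1 e2 c12.
have c12U : con (~: U) y1 y2.
  by apply: con_sub c12; apply/subsetP => t; rewrite !inE negb_or => /andP[].
have inS : x1 \in S -> x2 \in S -> x1 = x2.
  move=> x1S x2S; apply: (clique_block_detour_free SB cS x1S x2S y1S y2S e1 e2).
  by apply: con_sub c12; apply/subsetP => t; rewrite !inE negb_or => /andP[].
have [x1U|x1U] := boolP (x1 \in U); have [x2U|x2U] := boolP (x2 \in U).
- exact: dU x1U x2U y1U y2U e1 e2 c12U.
- have x2S : x2 \in S by move: x2US; rewrite (negPf x2U).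
  have [x1S|x1S] := boolP (x1 \in S); first exact: inS.
  by case: (mixed x1 x2 y1 y2).
- have x1S : x1 \in S by move: x1US; rewrite (negPf x1U).
  have [x2S|x2S] := boolP (x2 \in S); first exact: inS.
  by case: (mixed x2 x1 y2 y1); rewrite // 1?e_sym // con_sym.
- by apply: inS; [move: x1US; rewrite (negPf x1U) | move: x2US; rewrite (negPf x2U)].
Qed.

Lemma boundary_edge (U : {set T}) u w : connected_on e setT -> u \in U -> w \notin U ->
  exists x y, [/\ x \in U, y \notin U & e x y].
Proof.
move=> /connected_onP conT uU wU.
suff /exists_inP[x xU /exists_inP[y]] : [exists x in U, exists y in ~: U, e x y].
  by rewrite inE => yU exy; exists x, y.
apply: contraNT wU => /exists_inPn noedge.
suff closedU : closed (induced_rel e setT) U.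
  by rewrite -(closed_connect closedU (conT u w _ _)) ?inE.
move=> a b /and3P[eab _ _]; apply/idP/idP => [aU|bU]; apply: contraT => nU.
- by move: (noedge a aU) => /exists_inPn /(_ b); rewrite inE nU eab => /(_ isT).
- by move: (noedge b bU) => /exists_inPn /(_ a); rewrite inE nU e_sym eab => /(_ isT).
Qed.

Local Notation blue B k := (iter k (force_step e) B).

Definition white_nbrs (X : {set T}) u : {set T} := [set t | e u t & t \notin X].

Lemma force_step_ext (B : {set T}) : B \subset force_step e B.
Proof. exact: subsetUl. Qed.

Lemma subset_blue (B : {set T}) k1 k2 : k1 <= k2 -> blue B k1 \subset blue B k2.
Proof.
move: k1 k2; apply: (@homo_leq _ (fun k => blue B k) (fun X Y => X \subset Y)) => [X|Y X Z|k].
- exact: subxx.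
- exact: subset_trans.
- exact: force_step_ext.
Qed.

Lemma extensive_iter_fix (F : {set T} -> {set T}) (B : {set T}) :
  (forall X : {set T}, X \subset F X) -> F (iter #|T| F B) = iter #|T| F B.
Proof.
move=> Fext; set n := #|T|.
suff /existsP[k /eqP fixk] : [exists k : 'I_n.+1, F (iter k F B) == iter k F B].
  by rewrite -(subnK (leq_ord k)) iterD iter_fix.
apply: contraT => /existsPn noFix.
suff grow k : k <= n.+1 -> k <= #|iter k F B|.
  by have := grow _ (leqnn _); rewrite ltnNge max_card.
elim: k => // k IH kn; apply: (leq_ltn_trans (IH (ltnW kn))).
by rewrite proper_card // properEneq Fext eq_sym (noFix (Ordinal kn)).
Qed.

Lemma closure_stable (B : {set T}) : force_step e (force_closure e B) = force_closure e B.
Proof. exact: extensive_iter_fix force_step_ext. Qed.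

Lemma stable_no_single_white (X : {set T}) u :
  force_step e X = X -> u \in X -> #|white_nbrs X u| != 1.
Proof.
move=> fixX uX; apply/negP => /cards1P[w ww].
have /setIdP[euw wX] : w \in white_nbrs X u by rewrite ww set11.
have : w \in force_step e X.
  rewrite !inE; apply/orP; right; apply/exists_inP; exists u => //; rewrite wX euw /=.
  by have -> : [set t | e u t & t \notin X] = [set w] := ww; rewrite cards1.
by rewrite fixX (negPf wX).
Qed.

Lemma zero_forcing_number_le (B : {set T}) :
  zero_forcing_set e B -> zero_forcing_number e <= #|B|.
Proof.
move=> zB; rewrite /zero_forcing_number.
have : B \in index_enum {set T} by rewrite mem_index_enum.
elim: (index_enum _) => // A r IH; rewrite inE big_cons => /predU1P[<-|/IH le_r].
  by rewrite zB geq_minl.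
by case: ifP => // _; apply: leq_trans le_r; apply: geq_minr.
Qed.

Lemma zero_forcing_number_ge m : m <= #|T| ->
  (forall B, zero_forcing_set e B -> m <= #|B|) -> m <= zero_forcing_number e.
Proof.
move=> mT lower; apply: (big_ind (fun k => m <= k)) => // k1 k2.
by rewrite leq_min => -> ->.
Qed.

(* U :\: W forces U within the subgraph induced on U: every set X containing U :\: W in
   which no vertex of X :&: U has exactly one white neighbour inside U contains U. *)
Definition forces_within (U W : {set T}) : Prop :=
  forall X : {set T}, U :\: W \subset X ->
    {in X :&: U, forall u, #|U :&: white_nbrs X u| != 1} -> U \subset X.

Lemma forces_within_zero_forcing (W : {set T}) :
  forces_within setT W -> zero_forcing_set e (~: W).
Proof.
move=> fW; rewrite /zero_forcing_set eqEsubset subsetT /=.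
apply: fW => [|u /setIP[uX _]]; first by rewrite setTD (subset_blue _ (leq0n _)).
by rewrite setTI; apply: stable_no_single_white (closure_stable _) uX.
Qed.

Lemma white_nbrs_glue (U S X : {set T}) x u : detour_free U -> is_clique e S ->
  S :&: U = [set x] -> S \subset X \/ x \notin X -> u \in X -> u \in U ->
  (U :|: S) :&: white_nbrs X u = U :&: white_nbrs X u.
Proof.
move=> dU cS SU SXx uX uU; apply/setP => t; rewrite !inE.
have [tU|tU] //= := boolP (t \in U); apply/negbTE/and3P => -[tS eut tX].
have tx : t != x by rewrite -(meet_single SU tS).
have ux := attach_nbr dU cS SU tS tx uU (etrans (e_sym t u) eut).
by case: SXx => [/subsetP/(_ t tS)|]; [rewrite (negPf tX) | rewrite -ux uX].
Qed.

(* Gluing S at x and declaring one more vertex y of S white preserves forcing: once x is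
   blue, a third vertex v of S sees y as its only white neighbour. *)
Lemma forces_within_glue (U W S : {set T}) x y v :
  detour_free U -> is_clique e S -> S :&: U = [set x] -> W \subset U ->
  y \in S -> v \in S -> y != x -> v != x -> v != y ->
  forces_within U W -> forces_within (U :|: S) (y |: W).
Proof.
move=> dU cS SU WU yS vS yx vx vy fW X sX stX.
have /setIP[xS xU] : x \in S :&: U by rewrite SU set11.
have outU s : s \in S -> s != x -> s \notin U by move=> sS; rewrite (meet_single SU sS).
have outW s : s \notin U -> s \notin W by apply: contra; apply: subsetP.
have blueX t : t \in U :|: S -> t != y -> t \notin W -> t \in X.
  by move=> tUS ty tW; apply: (subsetP sX); rewrite in_setD tUS andbT !inE negb_or ty.
have forceU : S \subset X \/ x \notin X -> U \subset X.
  move=> SXx; apply: fW => [|u /setIP[uX uU]].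
    apply/subsetP => t /setDP[tU tW]; apply: blueX tW; first by rewrite inE tU.
    by apply: contraNneq (outU y yS yx) => <-.
  by rewrite -(white_nbrs_glue dU cS SU SXx uX uU); apply: stX; rewrite !inE uX uU.
have xX : x \in X.
  by apply: contraT => xX; move: (subsetP (forceU (or_intror xX)) x xU); rewrite (negPf xX).
have yX : y \in X.
  have vX : v \in X by apply: blueX; rewrite ?inE ?vS ?orbT ?outW ?outU.
  apply/negPn/negP => yX; have := stX v; rewrite !inE vX vS orbT /= => /(_ isT) /negP; apply.
  apply/cards1P; exists y; apply/setP => t; rewrite !inE; apply/idP/idP => [|/eqP->].
    case/and3P => tUS evt; apply: contraR => ty.
    have [tU|tU] := boolP (t \in U); first by rewrite (attach_nbr dU cS SU vS vx tU evt).
    by apply: blueX; rewrite ?inE ?tUS ?outW.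
  by rewrite yS orbT yX andbT; move/cliqueP: cS; apply.
have SX : S \subset X.
  apply/subsetP => s sS; have [->//|sx] := eqVneq s x; have [->//|sy] := eqVneq s y.
  by apply: blueX; rewrite ?inE ?sS ?orbT ?outW ?outU.
by rewrite subUset SX forceU //; left.
Qed.

Definition forced_at (B : {set T}) k u w : bool :=
  [&& u \in blue B k, w \notin blue B k & white_nbrs (blue B k) u == [set w]].

Lemma forced_first (B : {set T}) w n : w \notin B -> w \in blue B n ->
  exists k u, k < n /\ forced_at B k u w.
Proof.
move=> wB; elim: n => [|n IH]; first by rewrite /= (negPf wB).
have [wn _|wn] := boolP (w \in blue B n).
  by have [k [u [kn fk]]] := IH wn; exists k, u; split=> //; apply: ltnW.
rewrite iterS inE (negPf wn) /= inE => /exists_inP[u un /andP[/andP[_ euw] /cards1P[w' ww']]].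
have w'w : w' = w by apply/esym/set1P; rewrite -ww' inE euw wn.
by exists n, u; split=> //; rewrite /forced_at un wn; apply/eqP; rewrite -w'w.
Qed.

Lemma forced_at_clique_once (S B : {set T}) k k' u w w' : is_clique e S -> u \in S ->
  w' \in S -> forced_at B k u w -> w' \notin blue B k' -> k <= k' -> w' = w.
Proof.
move=> cS uS w'S /and3P[uk _ /eqP ww] w'k' kk'.
have w'k : w' \notin blue B k by apply: contra w'k'; apply/subsetP/subset_blue.
have uw' : u != w' by apply: contraNneq w'k => <-.
by apply/set1P; rewrite -ww inE w'k andbT; move/cliqueP: cS; apply.
Qed.

Definition forced_in (B S : {set T}) w : bool :=
  [exists k : 'I_#|T|, exists u in S, forced_at B k u w].

Lemma forced_in_block (B : {set T}) w : zero_forcing_set e B -> w \notin B ->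
  exists2 S, S \in blocks e & (w \in S) && forced_in B S w.
Proof.
move=> /eqP zB wB; have wT : w \in blue B #|T| by rewrite -/(force_closure e B) zB inE.
have [k [u [kT fk]]] := forced_first wB wT.
have euw : e u w.
  case/and3P: fk => _ _ /eqP ww.
  by have /setIdP[] : w \in white_nbrs (blue B k) u by rewrite ww set11.
have [S SB /andP[uS wS]] := edge_in_block euw.
by exists S; rewrite // wS; apply/existsP; exists (Ordinal kT); apply/exists_inP; exists u.
Qed.

Lemma forced_in_inj (B S : {set T}) w1 w2 : is_clique e S -> w1 \in S -> w2 \in S ->
  forced_in B S w1 -> forced_in B S w2 -> w1 = w2.
Proof.
move=> cS w1S w2S /existsP[k1 /exists_inP[u1 u1S f1]] /existsP[k2 /exists_inP[u2 u2S f2]].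
have [k12|k21] := leqP k1 k2.
  by apply/esym/(forced_at_clique_once cS u1S w2S f1 _ k12); case/and3P: f2.
by apply: (forced_at_clique_once cS u2S w1S f2 _ (ltnW k21)); case/and3P: f1.
Qed.

Section CliqueBlocks.
Hypothesis blocks_clique : forall S, S \in blocks e -> is_clique e S.

Lemma zero_forcing_lower (B : {set T}) : zero_forcing_set e B -> #|~: B| <= #|blocks e|.
Proof.
move=> zB; pose f w := odflt set0 [pick S in blocks e | (w \in S) && forced_in B S w].
have fP w : w \notin B -> [/\ f w \in blocks e, w \in f w & forced_in B (f w) w].
  move=> wB; rewrite /f; case: pickP => [S /andP[-> /andP[-> ->]] // | none].
  by have [S SB /andP[wS fS]] := forced_in_block zB wB; move: (none S); rewrite SB wS fS.
have finj : {in ~: B &, injective f}.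
  move=> w1 w2; rewrite !inE => /fP[b1 w1S f1] /fP[_ w2S f2] eqf.
  by apply: forced_in_inj (blocks_clique b1) w1S _ f1 _; rewrite eqf.
rewrite -(card_in_imset finj); apply/subset_leq_card/subsetP => S /imsetP[w].
by rewrite inE => /fP[SB _ _] ->.
Qed.

Definition blocks_in (U : {set T}) : {set {set T}} := [set S in blocks e | S \subset U].

Lemma blocks_inE (U S : {set T}) : (S \in blocks_in U) = (S \in blocks e) && (S \subset U).
Proof. by rewrite !inE. Qed.

Lemma blocks_in_glue (U S : {set T}) x : detour_free U -> S \in blocks e ->
  S :&: U = [set x] -> blocks_in (U :|: S) = S |: blocks_in U.
Proof.
move=> dU SB SU; have cS := blocks_clique SB.
have /setIP[xS xU] : x \in S :&: U by rewrite SU set11.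
apply/setP => S'; rewrite in_setU1 !blocks_inE.
have [->|S'S] /= := eqVneq S' S; first by rewrite SB subsetUr.
apply/andP/andP => -[S'B S'U]; split=> //; last exact: subset_trans S'U (subsetUl _ _).
apply: contraNT S'S => /subsetPn[s sS' sU].
have sS : s \in S by move: (subsetP S'U s sS'); rewrite inE (negPf sU).
have sx : s != x by apply: contraNneq sU => ->.
have S'S : S' \subset S.
  apply/subsetP => t tS'; have [->//|ts] := eqVneq t s.
  have est : e s t by move/cliqueP: (blocks_clique S'B); apply; rewrite // eq_sym.
  have [tU|tU] := boolP (t \in U); first by rewrite (attach_nbr dU cS SU sS sx tU est).
  by move: (subsetP S'U t tS'); rewrite inE (negPf tU).
move: S'B SB; rewrite !inE => /maxsetP[_ maxS'] /maxsetP[ncS _].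
by rewrite (maxS' S ncS S'S).
Qed.

Lemma third_vertex (S : {set T}) x y : 3 <= #|S| -> exists v, [/\ v \in S, v != x & v != y].
Proof.
move=> S3; have : ~~ (S \subset [set x; y]).
  apply: contraTN S3 => /subset_leq_card; rewrite cards2 -leqNgt => Sxy.
  by apply: leq_trans Sxy _; case: (x != y).
by case/subsetPn => v vS; rewrite !inE negb_or => /andP[vx vy]; exists v.
Qed.

Hypothesis connected_T : connected_on e setT.
Hypothesis blocks_big : forall S, S \in blocks e -> 3 <= #|S|.

Record tree_part (U W : {set T}) : Prop := TreePart {
  tree_detour_free : detour_free U;
  tree_sub : W \subset U;
  tree_card : #|W| = #|blocks_in U|;
  tree_forces : forces_within U W;
  tree_size : (2 * #|W|).+1 <= #|U| }.

Lemma tree_part_root r : tree_part [set r] set0.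
Proof.
split; rewrite ?sub0set ?cards0 ?cards1 //.
- by move=> x1 x2 y1 y2 /set1P-> /set1P->.
- apply/esym/eqP; rewrite cards_eq0; apply/eqP/setP => S; rewrite blocks_inE in_set0.
  apply/negbTE/andP => -[SB /subset_leq_card]; rewrite cards1.
  by move/(leq_trans (blocks_big SB)).
- by move=> X; rewrite setD0.
Qed.

(* A proper tree part grows by the block of a boundary edge. *)
Lemma tree_part_grow U W : tree_part U W -> U != setT ->
  exists U' W', tree_part U' W' /\ #|U| < #|U'|.
Proof.
case=> dU WU cardW fW sizeU nUT.
have [u uU] : exists u, u \in U by apply/set0Pn; rewrite -card_gt0 (leq_trans _ sizeU).
have [w _ wU] : exists2 w, w \in setT & w \notin U.
  by apply/subsetPn; apply: contra nUT => TU; rewrite eqEsubset subsetT.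
have [x [y [xU yU exy]]] := boundary_edge connected_T uU wU.
have [S SB /andP[xS yS]] := edge_in_block exy.
have cS := blocks_clique SB; have S3 := blocks_big SB.
have SU := attach_once dU cS xU xS yS yU.
have [v [vS vx vy]] := third_vertex x y S3.
have yx : y != x by apply: contraNneq yU => ->.
have yW : y \notin W by apply: contra yU; apply: subsetP.
have SnU : S \notin blocks_in U.
  by rewrite blocks_inE SB; apply/subsetPn; exists y.
have cardUS : #|U| + 2 <= #|U :|: S|.
  have := cardsUI U S; rewrite setIC SU cards1; clear -S3; lia.
exists (U :|: S), (y |: W); split; last by clear -cardUS; lia.
split.
- exact: detour_free_glue dU SB cS SU.
- by apply/subsetP => t /setU1P[->|/(subsetP WU) tU]; rewrite inE ?yS ?tU ?orbT.
- by rewrite (blocks_in_glue dU SB SU) !cardsU1 yW SnU cardW.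
- exact: forces_within_glue dU cS SU WU yS vS yx vx vy fW.
- by rewrite cardsU1 yW; clear -sizeU cardUS; lia.
Qed.

Lemma tree_part_complete U W : tree_part U W -> exists W', tree_part setT W'.
Proof.
have [n] := ubnP #|~: U|; elim: n U W => // n IH U W cU tp.
have [UT|nUT] := eqVneq U setT; first by exists W; rewrite -UT.
have [U' [W' [tp' ltU]]] := tree_part_grow tp nUT.
by apply: IH tp'; have := cardsC U; have := cardsC U'; clear -cU ltU; lia.
Qed.

Lemma clique_tree_forcing_set : exists W : {set T},
  [/\ zero_forcing_set e (~: W), #|W| = #|blocks e| & (2 * #|blocks e|).+1 <= #|T|].
Proof.
have [S SB] := block_exists.
have [r _] : exists r, r \in S.
  by apply/set0Pn; rewrite -card_gt0 (leq_trans _ (blocks_big SB)).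
have [W [_ _ cardW fW sizeW]] := tree_part_complete (tree_part_root r).
have allB : blocks_in setT = blocks e by apply/setP => B; rewrite blocks_inE subsetT andbT.
rewrite allB in cardW; exists W; rewrite -cardW -cardsT; split=> //.
exact: forces_within_zero_forcing.
Qed.

Lemma zero_forcing_number_clique_tree : zero_forcing_number e = #|T| - #|blocks e|.
Proof.
have [W [zW cardW _]] := clique_tree_forcing_set.
apply/eqP; rewrite eqn_leq; apply/andP; split.
  by rewrite -cardW -(cardsC W) addKn; apply: zero_forcing_number_le.
apply: zero_forcing_number_ge (leq_subr _ _) _ => B zB.
by have := zero_forcing_lower zB; have := cardsC B; lia.
Qed.

End CliqueBlocks.

End CliqueTrees.

Lemma half_bounds n b : (2 * b).+1 <= n -> 0 < b -> n./2 + 1 <= n - b <= n - 1.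
Proof. by rewrite -divn2 => *; apply/andP; split; lia. Qed.

Theorem mainTheorem3 (T : finType) (e : rel T)
  (e_sym : symmetric e) (e_irr : irreflexive e)
  (hct : clique_tree e)
  (hbig : forall S, S \in blocks e -> 3 <= #|S|) :
  let n := #|T| in
  let b := #|blocks e| in
  let k := zero_forcing_number e in
  k = n - b /\ n./2 + 1 <= k <= n - 1.
Proof.
move=> n b k; case/andP: hct => hconn /forall_inP hcl.
have k_eq : k = n - b := zero_forcing_number_clique_tree e_sym hcl hconn hbig.
have [_ [_ _ size_nb]] := clique_tree_forcing_set e_sym hcl hconn hbig.
have [S SB] := block_exists e_sym.
split=> //; rewrite k_eq; apply: half_bounds => //.
by rewrite /b card_gt0; apply/set0Pn; exists S.
Qed.
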